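(* Assume that every $3$-uniform hypergraph on $8$ vertices not containing a Fano plane has at most $48$ edges, and that the only such hypergraph with exactly $48$ edges (up to isomorphism) is $B_8$. Now let $n\ge 9$ be odd and let $H$ be a $3$-uniform hypergraph on $n$ vertices with $b(n)$ edges which does not contain a Fano plane. Suppose that whenever a four-element set $K\subseteq V(H)$ induces a tetrahedron in $H$ (i) we have $H\setminus K\cong B_{n-4}$, and (ii) every vertex $v\in V(H)\setminus K$ has degree exactly $5$ in $K$. Then $H$ is isomorphic to $B_n$.
   Context: ''Containing'' means having a (not necessarily induced) subhypergraph isomorphic to it. The Fano plane is the hypergraph on vertex set $\{1,\dots,7\}$ with edges $123,345,156,147,367,257,246$. For $m\ge1$, $B_m$ is the $3$-uniform hypergraph on $m$ vertices with a partition $V=X\cup Y$ into disjoint sets with $||X|-|Y||\le 1$ whose edges are exactly the triples meeting both $X$ and $Y$, and $b(m)=\frac{m-2}{2}\lfloor m^2/4\rfloor$ is its number of edges. A set $K$ of four vertices induces a tetrahedron if all four triples in $K$ are edges. $H\setminus K$ is the subhypergraph induced on $V(H)\setminus K$. The degree of $v$ in $K$ is the number of pairs $\{a,b\}\subseteq K$ with $\{v,a,b\}$ an edge of $H$. *)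

From mathcomp Require Import all_boot.
Set Implicit Arguments. Unset Strict Implicit. Unset Printing Implicit Defensive.

Definition uniform3 (T : finType) (V : {set T}) (E : {set {set T}}) : Prop :=
  forall e, e \in E -> (e \subset V) /\ #|e| = 3.

Definition hiso (T T' : finType) (V : {set T}) (E : {set {set T}})
    (V' : {set T'}) (E' : {set {set T'}}) : Prop :=
  exists f : T -> T',
    [/\ {in V &, injective f}, f @: V = V' &
        forall e : {set T}, e \subset V -> (e \in E <-> f @: e \in E')].

(* Fano plane on 'I_7 (vertices 1..7 renamed 0..6):
   123,345,156,147,367,257,246. *)
Definition tri (a b c : nat) : {set 'I_7} := [set inord a; inord b; inord c].
Definition fano_edges : seq {set 'I_7} :=
  [:: tri 0 1 2; tri 2 3 4; tri 0 4 5; tri 0 3 6; tri 2 5 6; tri 1 4 6; tri 1 3 5].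

(* Containing a Fano plane = having a (not necessarily induced) copy of it. *)
Definition contains_fano (T : finType) (V : {set T}) (E : {set {set T}}) : Prop :=
  exists f : 'I_7 -> T,
    [/\ injective f, (forall i, f i \in V) &
        forall t, t \in fano_edges -> f @: t \in E].

Definition Bm (m : nat) : {set {set 'I_m}} :=
  [set e : {set 'I_m} | [&& #|e| == 3, [exists x in e, x < m./2] &
                             [exists y in e, m./2 <= y]]].

(* b(m) = (m-2)/2 * floor(m^2/4)  (always an integer). *)
Definition b (m : nat) : nat := ((m - 2) * (m * m %/ 4)) %/ 2.

Definition tetra (T : finType) (E : {set {set T}}) (K : {set T}) : Prop :=
  #|K| = 4 /\ forall e : {set T}, e \subset K -> #|e| = 3 -> e \in E.

Definition degK (T : finType) (E : {set {set T}}) (K : {set T}) (v : T) : nat :=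
  #|[set p : {set T} | [&& p \subset K, #|p| == 2 & v |: p \in E]]|.

Definition induced (T : finType) (E : {set {set T}}) (W : {set T}) : {set {set T}} :=
  [set e in E | e \subset W].

From mathcomp Require Import all_boot zify.
Set Implicit Arguments. Unset Strict Implicit. Unset Printing Implicit Defensive.

(* Only hypothesis (ii) and the number of edges are needed.

   By (ii), a vertex outside a tetrahedron K misses exactly one pair of K, and
   two outside vertices never miss two pairs of K meeting in one point: that
   would produce, through three further tetrahedra, an outside vertex of degree
   at most 4.  So as soon as one outside vertex misses {a, b}, every outside
   vertex misses {a, b} or {c, d}, and {a, b, c, d} is split.  Splittings can be
   moved: any vertex u with u c d an edge may replace a, so any two such
   vertices x, y give a split {x, y, c, d}.  Colouring v by whether v c d is an
   edge, it follows that the edges are exactly the triples meeting both colour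
   classes.  Averaging over 4-sets, b(n) edges force a tetrahedron to exist, and
   counting crossing triples, b(n) of them force colour classes of sizes
   (n - 1)/2 and (n + 1)/2, which is B_n. *)

Lemma uniq4P (T : eqType) (a b c d : T) :
  reflect [/\ a != b, a != c, a != d, b != c & b != d /\ c != d] (uniq [:: a; b; c; d]).
Proof.
rewrite /= !inE !negb_or andbT -!andbA.
by apply: (iffP and5P) => [[? ? ? ? /andP[? ?]] | [? ? ? ? [-> ->]]].
Qed.

Lemma notin4P (T : eqType) (v a b c d : T) :
  reflect [/\ v != a, v != b, v != c & v != d] (v \notin [:: a; b; c; d]).
Proof. by rewrite !inE !negb_or; apply: and4P. Qed.

(** * Split tetrahedra of a symmetric ternary relation *)

Section SplitTetrahedra.

Variables (T : finType) (f : T -> T -> T -> bool).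
Hypotheses (fC12 : forall x y z, f x y z = f y x z)
           (fC23 : forall x y z, f x y z = f x z y)
           (f_loop : forall x y, f x x y = false).

Lemma fC13 x y z : f x y z = f z y x. Proof. by rewrite fC12 fC23 fC12. Qed.
Lemma fCA x y z : f x y z = f y z x. Proof. by rewrite fC12 fC23. Qed.
Lemma fAC x y z : f x y z = f z x y. Proof. by rewrite fC23 fC12. Qed.
Lemma f_loop_l x y : f x y x = false. Proof. by rewrite fC23 f_loop. Qed.

Lemma f_neq x y z : f x y z -> [/\ x != y, x != z & y != z].
Proof.
have [->|] := eqVneq x y; first by rewrite f_loop.
have [->|] := eqVneq x z; first by rewrite f_loop_l.
by have [->|] := eqVneq y z; first by rewrite fC13 f_loop.
Qed.

Ltac fperm := first [ assumption | rewrite fC12; assumption | rewrite fC23; assumption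
  | rewrite fC13; assumption | rewrite fCA; assumption | rewrite fAC; assumption ].

Definition tetra4 a b c d := [&& f a b c, f a b d, f a c d & f b c d].

Definition deg4 v a b c d : nat :=
  f v a b + f v a c + f v a d + f v b c + f v b d + f v c d.

Lemma tetra4_uniq a b c d : tetra4 a b c d -> uniq [:: a; b; c; d].
Proof. by case/and4P => /f_neq[? ? ?] /f_neq[_ ? ?] /f_neq[_ _ ?] _; apply/uniq4P. Qed.

Lemma tetra4_sub a b c d x y z : tetra4 a b c d ->
  x \in [:: a; b; c; d] -> y \in [:: a; b; c; d] -> z \in [:: a; b; c; d] ->
  x != y -> x != z -> y != z -> f x y z.
Proof.
case/and4P => ? ? ? ?; rewrite !inE.
by do 3 case/or4P=> /eqP->; rewrite ?eqxx // => _ _ _; fperm.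
Qed.

Ltac tetra_perm := apply/and4P; split; fperm.
Ltac notin4 := apply/notin4P; split; by [| rewrite eq_sym].
Ltac solve4 := first [ fperm | tetra_perm | notin4 ].

Hypothesis deg4_tetra : forall a b c d v,
  tetra4 a b c d -> v \notin [:: a; b; c; d] -> deg4 v a b c d = 5.

Lemma tetra4_miss a b c d v : tetra4 a b c d -> v \notin [:: a; b; c; d] ->
  ~~ f v a b -> [/\ f v a c, f v a d, f v b c, f v b d & f v c d].
Proof.
move=> Ht Hv; have := deg4_tetra Ht Hv; rewrite /deg4.
by case: (f v a b); case: (f v a c); case: (f v a d); case: (f v b c);
   case: (f v b d); case: (f v c d).
Qed.

Lemma tetra4_opposite a b c d v : tetra4 a b c d -> v \notin [:: a; b; c; d] ->
  f v a c -> f v a d -> f v b c -> f v b d -> f v a b = ~~ f v c d.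
Proof.
move=> Ht Hv vac vad vbc vbd; have := deg4_tetra Ht Hv.
by rewrite /deg4 vac vad vbc vbd; case: (f v a b); case: (f v c d).
Qed.

(* If x misses t1 t2 and y misses t1 t3, then x, t1, t3, t4 and then
   x, t2, t3, t4 are tetrahedra that force y to miss x t2; but then
   y, t1, t2, t4 is a tetrahedron in which x misses two pairs. *)
Lemma miss_adjacent t1 t2 t3 t4 x y : tetra4 t1 t2 t3 t4 ->
  x \notin [:: t1; t2; t3; t4] -> y \notin [:: t1; t2; t3; t4] ->
  ~~ f x t1 t2 -> f y t1 t3.
Proof.
move=> Ht Hx Hy nx; apply/negPn/negP => ny.
move: (Ht) (Hx) (Hy) => /and4P[t123 t124 t134 t234] /notin4P[? ? ? ?] /notin4P[? ? ? ?].
have [x13 x14 x23 x24 x34] := tetra4_miss Ht Hx nx.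
have [exy|xy] := eqVneq x y; first by rewrite -exy x13 in ny.
have [y12 y14 y32 y34 y24] : [/\ f y t1 t2, f y t1 t4, f y t3 t2, f y t3 t4 & f y t2 t4].
  by apply: tetra4_miss ny; solve4.
have [yx1 _ yx3 _ yx4] : [/\ f y t1 x, f y t1 t4, f y t3 x, f y t3 t4 & f y x t4].
  by apply: tetra4_miss ny; solve4.
have nyx2 : ~~ f y x t2.
  by rewrite (@tetra4_opposite x t2 t3 t4) ?y34 //; solve4.
have [_ _ x2y _ _] : [/\ f x t1 y, f x t1 t4, f x t2 y, f x t2 t4 & f x y t4].
  by apply: (@tetra4_miss t1 t2 y t4) nx; solve4.
by move: nyx2; rewrite fC12 fC23 x2y.
Qed.

Definition split4 a b c d := tetra4 a b c d /\ forall v, v \notin [:: a; b; c; d] ->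
  [/\ f v a c, f v a d, f v b c, f v b d & f v a b = ~~ f v c d].

Lemma split4_of_miss a b c d v0 : tetra4 a b c d -> v0 \notin [:: a; b; c; d] ->
  ~~ f v0 a b -> split4 a b c d.
Proof.
move=> Ht H0 n0; split=> // v Hv.
move: (Ht) (H0) (Hv) => /and4P[? ? ? ?] /notin4P[? ? ? ?] /notin4P[? ? ? ?].
have vac : f v a c by apply: (@miss_adjacent a b c d v0).
have vad : f v a d by apply: (@miss_adjacent a b d c v0); solve4.
have vbc : f v b c by apply: (@miss_adjacent b a c d v0); solve4.
have vbd : f v b d by apply: (@miss_adjacent b a d c v0); solve4.
by split=> //; apply: tetra4_opposite.
Qed.

Lemma split4C12 a b c d : split4 a b c d -> split4 b a c d.
Proof.
case=> /[dup] Ht /and4P[? ? ? ?] Hs; split; first by solve4.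
move=> v /[dup] /notin4P[? ? ? ?] Hv.
have [|vac vad vbc vbd vab] := Hs v; first by solve4.
by split=> //; rewrite fC23.
Qed.

Lemma split4C a b c d : split4 a b c d -> split4 c d a b.
Proof.
case=> /[dup] Ht /and4P[? ? ? ?] Hs; split; first by solve4.
move=> v /[dup] /notin4P[? ? ? ?] Hv.
have [|vac vad vbc vbd vab] := Hs v; first by solve4.
by split; rewrite ?vab ?negbK //; solve4.
Qed.

Lemma split4_side a b c d v : split4 a b c d -> f v a b = ~~ f v c d.
Proof.
case=> Ht Hs; have [/Hs[] //|] := boolP (v \notin [:: a; b; c; d]).
move: Ht => /and4P[abc abd acd bcd]; rewrite negbK !inE.
case/or4P => /eqP ->.
- by rewrite f_loop acd.
- by rewrite f_loop_l bcd.
- by rewrite f_loop fCA abc.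
- by rewrite f_loop_l fCA abd.
Qed.

(* The vertex a misses the pair u b of the tetrahedron u b c d. *)
Lemma split4_replace a b c d u : split4 a b c d -> f u c d -> u != b -> split4 u b c d.
Proof.
move=> Hs ucd ub; have [<- //|ua] := eqVneq a u.
case: (Hs) => /[dup] Ht /tetra4_uniq/uniq4P[? ? ? ? [? ?]] Hout.
move: (Ht) => /and4P[? ? ? ?]; have [? ? _] := f_neq ucd.
have [|_ _ ubc ubd uab] := Hout u; first by solve4.
apply: (@split4_of_miss u b c d a); try solve4.
by rewrite fC12 uab ucd.
Qed.

Lemma split4_pair a b c d x y : split4 a b c d -> f x c d -> f y c d -> x != y ->
  split4 x y c d.
Proof.
move=> Hs xcd ycd xy.
have [a' Ha'] : exists a', split4 a' x c d.
  have [<-|xb] := eqVneq b x; first by exists a.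
  by exists b; apply/split4C12/(split4_replace Hs xcd); rewrite eq_sym.
by apply/split4C12/(split4_replace Ha' ycd); rewrite eq_sym.
Qed.

Lemma split4_same_side a b c d x y z : split4 a b c d -> f x c d -> f y c d ->
  x != y -> f x y z = ~~ f z c d.
Proof. by move=> Hs xcd ycd xy; rewrite fAC (split4_side _ (split4_pair Hs xcd ycd xy)). Qed.

Definition bipartite3 (col : T -> bool) := forall x y z, x != y -> x != z -> y != z ->
  f x y z = [|| col x, col y | col z] && [|| ~~ col x, ~~ col y | ~~ col z].

Lemma split4_bipartite a b c d : split4 a b c d -> bipartite3 (fun v => f v c d).
Proof.
move=> Hs.
have same x y z : x != y -> f x c d = f y c d -> f x y z = (f x c d != f z c d).
  move=> xy; case xcd: (f x c d) => /esym ycd.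
    by rewrite (split4_same_side z Hs xcd ycd xy).
  have side v : f v a b = ~~ f v c d := split4_side v Hs.
  by rewrite (split4_same_side z (split4C Hs)) ?side ?xcd ?ycd ?negbK.
move=> x y z xy xz yz.
have [exy|nxy] := eqVneq (f x c d) (f y c d).
  by rewrite same // -exy; case: (f x c d); case: (f z c d).
have [exz|nxz] := eqVneq (f x c d) (f z c d).
  by rewrite fC23 same // -exz; case: (f x c d); case: (f y c d).
have eyz : f y c d = f z c d.
  by move: nxy nxz; case: (f x c d); case: (f y c d); case: (f z c d).
by rewrite fCA same // -eyz; move: nxy; case: (f x c d); case: (f y c d).
Qed.

Lemma tetra4_bipartite a b c d v : tetra4 a b c d -> v \notin [:: a; b; c; d] ->
  exists col, bipartite3 col.
Proof.
move=> Ht Hv.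
have split_by a' b' c' d' : tetra4 a' b' c' d' -> v \notin [:: a'; b'; c'; d'] ->
    ~~ f v a' b' -> exists col, bipartite3 col.
  by move=> Ht' Hv' miss; exists (fun w => f w c' d');
     apply: split4_bipartite (split4_of_miss Ht' Hv' miss).
have : ~~ [&& f v a b, f v a c, f v a d, f v b c, f v b d & f v c d].
  apply/negP => /and5P[vab vac vad vbc /andP[vbd vcd]].
  by move: (deg4_tetra Ht Hv); rewrite /deg4 vab vac vad vbc vbd vcd.
move: (Ht) (Hv) => /and4P[? ? ? ?] /notin4P[? ? ? ?].
rewrite !negb_and => /orP[|/orP[|/orP[|/orP[|/orP[]]]]] miss.
- exact: (split_by a b c d).
- by apply: (split_by a c b d); solve4.
- by apply: (split_by a d b c); solve4.
- by apply: (split_by b c a d); solve4.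
- by apply: (split_by b d a c); solve4.
- by apply: (split_by c d a b); solve4.
Qed.

End SplitTetrahedra.

Section SmallSets.
Variable T : finType.

Definition pairs4 (a b c d : T) : seq {set T} :=
  [:: [set a; b]; [set a; c]; [set a; d]; [set b; c]; [set b; d]; [set c; d]].

Lemma card_set4 (a b c d : T) : uniq [:: a; b; c; d] -> #|[set a; b; c; d]| = 4.
Proof.
move/card_uniqP => /= <-; apply: eq_card => x.
by rewrite !inE !orbA.
Qed.

Lemma card_set3 (x y z : T) : uniq [:: x; y; z] -> #|[set x; y; z]| = 3.
Proof.
move/card_uniqP => /= <-; apply: eq_card => t.
by rewrite !inE !orbA.
Qed.

Lemma mem_pairs4 (a b c d : T) p : uniq [:: a; b; c; d] ->
  (p \in pairs4 a b c d) = (p \subset [set a; b; c; d]) && (#|p| == 2).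
Proof.
move/uniq4P => [ab ac ad bc [bd cd]].
apply/idP/andP => [|[pK /cards2P[x [y [xy pE]]]]].
  rewrite !inE => /or4P[| | |/or3P[| |]] /eqP ->; rewrite cards2 ?ab ?ac ?ad ?bc ?bd ?cd;
  by split=> //; apply/subsetP => t; rewrite !inE => /orP[] /eqP ->; rewrite eqxx ?orbT.
move/subsetP: pK; rewrite pE => pK.
have := pK x; have := pK y; rewrite !inE !eqxx ?orbT -!orbA => /(_ isT) hy /(_ isT) hx.
move: xy; case/or4P: hx => /eqP ->; case/or4P: hy => /eqP ->; rewrite ?eqxx // => _;
by rewrite /= ?orbT // setUC eqxx ?orbT.
Qed.

Lemma uniq_pairs4 (a b c d : T) : uniq [:: a; b; c; d] -> uniq (pairs4 a b c d).
Proof.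
move=> u; apply/card_uniqP.
have -> : #|pairs4 a b c d| = #|[set p : {set T} | p \subset [set a; b; c; d] & #|p| == 2]|.
  by apply: eq_card => p; rewrite inE mem_pairs4.
by rewrite cards_draws card_set4.
Qed.

Lemma card_pairs4 (a b c d : T) (P : pred {set T}) : uniq [:: a; b; c; d] ->
  #|[set p : {set T} | [&& p \subset [set a; b; c; d], #|p| == 2 & P p]]| =
  count P (pairs4 a b c d).
Proof.
move=> u; rewrite -size_filter -(card_uniqP (filter_uniq _ (uniq_pairs4 u))).
by apply: eq_card => p; rewrite inE mem_filter mem_pairs4 // andbA andbC.
Qed.

Lemma card3_set3 (e : {set T}) : #|e| = 3 ->
  exists x y z, [/\ x != y, x != z, y != z & e = [set x; y; z]].
Proof.
move=> e3; have /card_gt0P[x xe] : 0 < #|e| by rewrite e3.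
have /cards2P[y [z [yz eyz]]] : #|e :\ x| == 2.
  by move: e3; rewrite (cardsD1 x) xe add1n => -[->].
have : [set y; z] \subset e :\ x by rewrite eyz.
rewrite subUset !sub1set !inE => /andP[/andP[xy _] /andP[xz _]].
exists x, y, z; split; rewrite ?(eq_sym x) //.
by rewrite -setUA -eyz setD1K.
Qed.

Lemma existsb_set3 (P : pred T) x y z :
  [exists t in [set x; y; z], P t] = [|| P x, P y | P z].
Proof.
apply/existsP/idP => [[t /andP[]]|].
  by rewrite !inE => /orP[/orP[]|] /eqP-> ->; rewrite ?orbT.
by case/or3P => Pt; [exists x | exists y | exists z]; rewrite !inE eqxx ?orbT.
Qed.

End SmallSets.

Lemma sum_pred_card (X : finType) (A : {set X}) (P : pred X) :
  \sum_(x in A) P x = #|[set x in A | P x]|.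
Proof.
rewrite -sum1dep_card big_mkcond [RHS]big_mkcond /=.
by apply: eq_bigr => x _; case: (x \in A); case: (P x).
Qed.

Lemma existsb_imset (T T' : finType) (g : T -> T') (e : {set T}) (P : pred T') :
  [exists y in g @: e, P y] = [exists x in e, P (g x)].
Proof.
apply/existsP/existsP => [[_ /andP[/imsetP[x xe ->] Pgx]]|[x /andP[xe Pgx]]].
  by exists x; rewrite xe.
by exists (g x); rewrite imset_f.
Qed.

Lemma card_supersets (T : finType) (e : {set T}) k : #|e| = k ->
  #|[set Q : {set T} | #|Q| == k.+1 & e \subset Q]| = #|T| - k.
Proof.
move=> ek.
have -> : [set Q : {set T} | #|Q| == k.+1 & e \subset Q] = (fun x => x |: e) @: ~: e.
  apply/setP => Q; rewrite inE; apply/andP/imsetP => [[/eqP Qk eQ]|[x xe ->]].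
    have /cards1P[x Qx] : #|Q :\: e| == 1 by rewrite cardsD (setIidPr eQ) Qk ek subSnn.
    have : x \in Q :\: e by rewrite Qx set11.
    rewrite !inE => /andP[xe xQ]; exists x; rewrite ?inE //.
    by rewrite -(setID Q e) (setIidPr eQ) Qx setUC.
  by rewrite cardsU1 ek -in_setC xe subsetUr.
rewrite card_in_imset; first by rewrite cardsCs setCK ek.
move=> x y; rewrite !inE => xe ye /setP/(_ x); rewrite !inE eqxx (negbTE xe) /=.
by rewrite orbF => /esym/eqP.
Qed.

(** * Triples meeting both colour classes *)

Section CrossingTriples.
Variable T : finType.

Definition crossing_triples (col : T -> bool) : {set {set T}} :=
  [set e : {set T} | [&& #|e| == 3, [exists x in e, col x] & [exists x in e, ~~ col x]]].

Lemma crossing_triplesN (col : T -> bool) :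
  crossing_triples (fun x => ~~ col x) = crossing_triples col.
Proof.
apply/setP => e; rewrite !inE; case: (#|e| == 3) => //=.
by rewrite andbC; congr (_ && _); apply: eq_existsb => x; rewrite negbK.
Qed.

Lemma subset_predE (e : {set T}) (p : pred T) :
  (e \subset [set x | p x]) = ~~ [exists x in e, ~~ p x].
Proof.
apply/subsetP/existsPn => [sub x|all_p x xe]; last by move: (all_p x); rewrite xe negbK inE.
by rewrite negb_and negbK; case: (boolP (x \in e)) => //= /sub; rewrite inE.
Qed.

Lemma card_crossing_triples (col : T -> bool) :
  'C(#|T|, 3) = #|crossing_triples col| + 'C(#|[set x | col x]|, 3)
                + 'C(#|[set x | ~~ col x]|, 3).
Proof.
rewrite -card_draws -!cards_draws -sum1_card.
rewrite (eq_bigr (fun e => (e \in crossing_triples col) + (e \subset [set x | col x])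
                          + (e \subset [set x | ~~ col x]))) => [|e]; last first.
  rewrite !inE => /eqP e3; rewrite e3 eqxx !subset_predE /=.
  have -> : [exists x in e, ~~ ~~ col x] = [exists x in e, col x].
    by apply: eq_existsb => x; rewrite negbK.
  have /card_gt0P[x xe] : 0 < #|e| by rewrite e3.
  have : [exists x in e, col x] || [exists x in e, ~~ col x].
    by case: (boolP (col x)) => cx; [apply/orP; left | apply/orP; right];
       apply/existsP; exists x; rewrite xe.
  by case: [exists x in e, col x]; case: [exists x in e, ~~ col x].
rewrite !big_split /= !sum_pred_card.
congr (_ + _ + _); apply: eq_card => e; rewrite !inE; first by rewrite andbA andbb.
all: exact: andbC.
Qed.

Lemma rank_set n (S : {set T}) : #|T| = n ->
  exists g : T -> 'I_n, injective g /\ forall x, (g x < #|S|) = (x \in S).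
Proof.
move=> Tn; pose s := enum S ++ enum (~: S).
have s_all x : x \in s by rewrite mem_cat !mem_enum inE orbN.
have lt_n x : index x s < n.
  by rewrite -Tn -(cardsC S) !cardE -size_cat index_mem.
exists (fun x => Ordinal (lt_n x)); split.
  by move=> x y /(congr1 val) /= /(index_inj x (s_all x) (s_all y)).
move=> x /=; rewrite index_cat mem_enum cardE; case: ifP => xS.
  by rewrite index_mem mem_enum xS.
by rewrite ltnNge leq_addr.
Qed.

End CrossingTriples.

Lemma hiso_crossing_triples (T T' : finType) (col : T -> bool) (col' : T' -> bool)
    (g : T -> T') :
  injective g -> #|T| = #|T'| -> (forall x, col' (g x) = col x) ->
  hiso [set: T] (crossing_triples col) [set: T'] (crossing_triples col').
Proof.
move=> inj_g card_eq g_col; exists g; split.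
- by move=> x y _ _ /inj_g.
- by apply/eqP; rewrite eqEcard subsetT card_imset // !cardsT card_eq leqnn.
move=> e _; rewrite !inE card_imset // !existsb_imset.
have -> : [exists x in e, col' (g x)] = [exists x in e, col x].
  by apply: eq_existsb => x; rewrite g_col.
have -> // : [exists x in e, ~~ col' (g x)] = [exists x in e, ~~ col x].
by apply: eq_existsb => x; rewrite g_col.
Qed.

Lemma Bm_crossing n : Bm n = crossing_triples (fun i : 'I_n => i < n./2).
Proof.
apply/setP => e; rewrite !inE; congr [&& _, _ & _].
by apply: eq_existsb => i; rewrite leqNgt.
Qed.

Lemma hiso_Bm (T : finType) n (col : T -> bool) : #|T| = n ->
  #|[set x | col x]| = n./2 -> hiso [set: T] (crossing_triples col) [set: 'I_n] (Bm n).
Proof.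
move=> Tn Xn; have [g [inj_g g_rank]] := rank_set [set x | col x] Tn.
rewrite Bm_crossing; apply: hiso_crossing_triples inj_g _ _; first by rewrite card_ord.
by move=> x; rewrite -Xn g_rank inE.
Qed.

(** * Edges of a 3-uniform hypergraph as a ternary relation *)

Section Triples.
Variables (T : finType) (E : {set {set T}}).
Hypothesis E3 : uniform3 [set: T] E.

Definition edge3 (x y z : T) := [set x; y; z] \in E.

Lemma edge3C12 x y z : edge3 x y z = edge3 y x z.
Proof. by rewrite /edge3 [[set x; y]]setUC. Qed.

Lemma edge3C23 x y z : edge3 x y z = edge3 x z y.
Proof. by rewrite /edge3 -!setUA [[set y; z]]setUC. Qed.

Lemma edge3_loop x y : edge3 x x y = false.
Proof.
apply/negP => /E3[_]; rewrite setUid cards2.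
by case: (x != y).
Qed.

Lemma tetra4_tetra a b c d : tetra4 edge3 a b c d -> tetra E [set a; b; c; d].
Proof.
move=> Ht; split; first by rewrite card_set4 // (tetra4_uniq edge3C12 edge3C23 edge3_loop Ht).
move=> e /subsetP eK /card3_set3[x [y [z [xy xz yz ee]]]]; subst e.
have inK t : t \in [set x; y; z] -> t \in [:: a; b; c; d] by move/eK; rewrite !inE -!orbA.
by apply: (tetra4_sub edge3C12 edge3C23 Ht); rewrite ?inK // !inE eqxx ?orbT.
Qed.

Lemma tetra_tetra4 K :
  tetra E K -> exists a b c d, K = [set a; b; c; d] /\ tetra4 edge3 a b c d.
Proof.
case=> K4 HK; have /card_gt0P[a aK] : 0 < #|K| by rewrite K4.
have /card3_set3[b [c [d [bc bd cd Ka]]]] : #|K :\ a| = 3.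
  by move: K4; rewrite (cardsD1 a) aK add1n => -[].
have : a \notin K :\ a by rewrite !inE eqxx.
rewrite Ka !inE !negb_or -andbA => /and3P[ab ac ad].
have KE : K = [set a; b; c; d] by rewrite -(setD1K aK) Ka !setUA.
have sub3 x y z : x != y -> x != z -> y != z -> [set x; y; z] \subset K -> edge3 x y z.
  by move=> xy xz yz sK; apply: HK sK _; rewrite card_set3 //= !inE !negb_or xy xz yz.
exists a, b, c, d; split=> //.
by apply/and4P; split; apply: sub3; rewrite // KE !subUset !sub1set !inE !eqxx ?orbT.
Qed.

Lemma degK_set4 a b c d v : uniq [:: a; b; c; d] ->
  degK E [set a; b; c; d] v = deg4 edge3 v a b c d.
Proof. by move=> u; rewrite /degK card_pairs4 //= /deg4 /edge3 !setUA addn0 !addnA. Qed.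

Lemma edges_crossing_triples K v :
  (forall K', tetra E K' -> forall w, w \notin K' -> degK E K' w = 5) ->
  tetra E K -> v \notin K -> exists col : T -> bool, E = crossing_triples col.
Proof.
move=> Hdeg tK vK; have [a [b [c [d [KE Ht]]]]] := tetra_tetra4 tK.
have deg5 a' b' c' d' w : tetra4 edge3 a' b' c' d' -> w \notin [:: a'; b'; c'; d'] ->
    deg4 edge3 w a' b' c' d' = 5.
  move=> Ht' Hw; rewrite -degK_set4 ?(tetra4_uniq edge3C12 edge3C23 edge3_loop Ht') //.
  by apply: (Hdeg _ (tetra4_tetra Ht')); move: Hw; rewrite !inE -!orbA.
have [|col Hcol] := tetra4_bipartite edge3C12 edge3C23 edge3_loop deg5 Ht (v := v).
  by move: vK; rewrite KE !inE -!orbA.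
exists col; apply/setP => e; rewrite inE.
have [/card3_set3[x [y [z [xy xz yz ->]]]]|n3] := eqVneq #|e| 3.
  by rewrite /= -/(edge3 x y z) (Hcol x y z) // !existsb_set3.
by apply/negbTE; apply: contra n3 => /E3[_ ->].
Qed.

End Triples.

(** * Counting *)

Section Density.
Variables (T : finType) (E : {set {set T}}).
Hypothesis E3 : uniform3 [set: T] E.

Lemma tetra_of_edges_in4 (Q : {set T}) :
  #|Q| = 4 -> 3 < #|[set e in E | e \subset Q]| -> tetra E Q.
Proof.
move=> Q4 gt3; split=> // e eQ e3.
have sub : [set e in E | e \subset Q] \subset [set e : {set T} | e \subset Q & #|e| == 3].
  by apply/subsetP => e'; rewrite !inE => /andP[/E3[_ ->] ->].
have /eqP eqs : [set e in E | e \subset Q] == [set e : {set T} | e \subset Q & #|e| == 3].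
  by rewrite eqEcard sub cards_draws Q4.
have : e \in [set e : {set T} | e \subset Q & #|e| == 3] by rewrite inE eQ e3.
by rewrite -eqs inE => /andP[].
Qed.

Lemma exists_tetra : 3 < #|T| -> 3 * 'C(#|T|, 3) < 4 * #|E| -> exists K, tetra E K.
Proof.
move=> T4 dense; pose S4 := [set Q : {set T} | #|Q| == 4].
have [/existsP[Q /andP[]]|/existsPn few] :=
  boolP [exists Q in S4, 3 < #|[set e in E | e \subset Q]|].
  by rewrite inE => /eqP Q4 /(tetra_of_edges_in4 Q4); exists Q.
have double : \sum_(Q in S4) #|[set e in E | e \subset Q]| = #|E| * (#|T| - 3).
  transitivity (\sum_(e in E) \sum_(Q in S4) (e \subset Q : nat)).
    by rewrite exchange_big; apply: eq_bigr => Q _; rewrite sum_pred_card.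
  rewrite -sum_nat_const; apply: eq_bigr => e /E3[_ e3].
  by rewrite sum_pred_card -(card_supersets e3); apply: eq_card => Q; rewrite !inE.
have : \sum_(Q in S4) #|[set e in E | e \subset Q]| <= #|S4| * 3.
  rewrite -sum_nat_const; apply: leq_sum => Q QS.
  by move: (few Q); rewrite QS /= -leqNgt.
rewrite double card_draws; have := mul_bin_left #|T| 3.
nia.
Qed.

End Density.

Lemma bin3E n : 'C(n, 3) * 6 + 3 * (n * n) = n * n * n + 2 * n.
Proof.
have := bin_ffact n 3; rewrite !ffactnS ffactn0 /= => ->.
case: n => [|[|[|n]]] //=; nia.
Qed.

Lemma bin3D x y :
  'C(x + y, 3) * 2 + x * y * 2 = ('C(x, 3) + 'C(y, 3)) * 2 + x * y * (x + y).
Proof. have := bin3E (x + y); have := bin3E x; have := bin3E y; nia. Qed.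

Lemma b_odd k : b k.*2.+1 * 2 = (k.*2 - 1) * (k * k.+1).
Proof.
rewrite /b; have -> : k.*2.+1 * k.*2.+1 %/ 4 = k * k.+1.
  have -> : k.*2.+1 * k.*2.+1 = k * k.+1 * 4 + 1 by nia.
  by rewrite divnMDl // divn_small // addn0.
rewrite divnK ?subSS ?subn0 //; apply: dvdn_mull.
by rewrite dvdn2 oddM oddS andbN.
Qed.

Lemma odd_halfK n : odd n -> n = (n./2).*2.+1.
Proof. by move=> on; rewrite -[LHS]odd_double_half on. Qed.

Lemma b_dense n : odd n -> 1 < n -> 3 * 'C(n, 3) < 4 * b n.
Proof.
move=> /odd_halfK -> n1; move: (n./2) n1 => k n1; have k0 : 0 < k by lia.
suff : 'C(k.*2.+1, 3) * 6 < b k.*2.+1 * 2 * 4 by lia.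
have := bin_ffact k.*2.+1 3; rewrite !ffactnS ffactn0 /= => ->.
rewrite b_odd -subn1 muln1 mulnC (mulnC k.*2).
have -> : (k.*2 - 1) * (k * k.+1) * 4 = (k.*2 - 1) * k.*2 * k.*2.+2 by rewrite -!mul2n; nia.
by rewrite ltn_pmul2l // muln_gt0; lia.
Qed.

Lemma b_split n x y : odd n -> 1 < n -> x + y = n ->
  'C(n, 3) = b n + 'C(x, 3) + 'C(y, 3) -> x = n./2 \/ y = n./2.
Proof.
move=> /odd_halfK nk n1 xy Hcount; move: (n./2) nk => k nk.
have := bin3D x y; rewrite xy Hcount; have := b_odd k; rewrite -nk.
set M := k.*2 - 1; have nM : n = M + 2 by lia.
rewrite nM mulnDr => bk Dxy.
have : M * (x * y) = M * (k * k.+1) by lia.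
move/eqP; rewrite eqn_pmul2l; last by lia.
move/eqP => pxy; have sxy : x + y = k.*2.+1 by lia.
have [xk|kx] := leqP x k; [left|right]; nia.
Qed.

Lemma crossing_balanced (T : finType) n (col : T -> bool) :
  #|T| = n -> odd n -> 1 < n -> #|crossing_triples col| = b n ->
  #|[set x | col x]| = n./2 \/ #|[set x | ~~ col x]| = n./2.
Proof.
move=> Tn on n1 Ecard; apply: b_split => //;
  last by rewrite -Ecard -Tn (card_crossing_triples col).
rewrite -Tn -(cardsC [set x | col x]); congr (_ + _).
by apply: eq_card => x; rewrite !inE.
Qed.

Theorem lemma2p6
  (H8 : forall E8 : {set {set 'I_8}},
     uniform3 [set: 'I_8] E8 -> ~ contains_fano [set: 'I_8] E8 ->
     #|E8| <= 48 /\ (#|E8| = 48 -> hiso [set: 'I_8] E8 [set: 'I_8] (Bm 8)))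
  (n : nat) (Hn9 : 9 <= n) (Hodd : odd n)
  (T : finType) (HT : #|T| = n) (E : {set {set T}})
  (HE : uniform3 [set: T] E) (HEcard : #|E| = b n)
  (Hfano : ~ contains_fano [set: T] E)
  (Htet : forall K : {set T}, tetra E K ->
     hiso (~: K) (induced E (~: K)) [set: 'I_(n - 4)] (Bm (n - 4)) /\
     (forall v, v \notin K -> degK E K v = 5)) :
  hiso [set: T] E [set: 'I_n] (Bm n).
Proof.
have deg5 K : tetra E K -> forall v, v \notin K -> degK E K v = 5.
  by move=> tK; case: (Htet K tK).
have [K tK] : exists K, tetra E K.
  apply: exists_tetra => //; first by rewrite HT; lia.
  by rewrite HT HEcard; apply: b_dense => //; lia.
have /card_gt0P[v] : 0 < #|~: K| by rewrite cardsCs setCK tK.1 HT; lia.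
rewrite inE => vK; have [col Ecol] := edges_crossing_triples HE deg5 tK vK.
rewrite Ecol in HEcard *.
have [] := crossing_balanced HT Hodd _ HEcard; first by lia.
  exact: hiso_Bm.
by rewrite -crossing_triplesN; apply: hiso_Bm.
Qed.
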